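(* Let $v\in\{1,\dots,m\}$, let $B\subseteq\mathcal{L}^{mn}$ be a ball, let $B''\subseteq B$ be a ball and $\mu_{v-1}>0$ such that $\|M_{v-1}(A)\|_\infty>\rho(B)\,\mu_{v-1}\,M_{v-2}(B'')$ for all $A\in B''$. If $B'\subseteq B''$ is a ball with $\rho(B')<\tfrac12\mu_{v-1}\rho(B'')$, then $\|M_{v-1}(A')\|_\infty>\tfrac12 M_{v-1}(B')$ for every $A'\in B'$.
   Context: $\mathbb{F}$ is the finite field with $k$ elements, $\mathcal{L}=\mathbb{F}((X^{-1}))$ with absolute value $|x|=k^{n}$ where $X^n$ is the leading term of $x$, $\|\mathbf{x}\|_\infty=\max_i|x_i|$; $m\times n$ matrices are identified with $\mathcal{L}^{mn}$; balls are closed balls $\{\|A-C\|_\infty\le\rho\}$ with radius $\rho(\cdot)$. For $A\in\mathcal{L}^{mn}$ let $\tilde A^*=\begin{pmatrix}A^T&I_n\\ I_m&0\end{pmatrix}$ and $\mathrm{col}_l(\tilde A^* )$ its $l$-th column; $\mathbf{x}\cdot\mathbf{y}=\sum x_iy_i$. Fix vectors $\mathbf{y}_1,\dots,\mathbf{y}_m\in\mathcal{L}^{m+n}$ that are orthonormal (i.e. $\mathbf{y}_i\cdot\mathbf{y}_j=\delta_{ij}$ and $\|\sum_it_i\mathbf{y}_i\|_\infty=\max_i|t_i|$ for all $t_i\in\mathcal{L}$). Let $G(A)$ be the $m\times m$ matrix with entries $G(A)_{il}=\mathbf{y}_i\cdot\mathrm{col}_l(\tilde A^* )$. For $1\le v\le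 m$, $M_v(A)\in\mathcal{L}^{\binom{m}{v}^2}$ is the vector of all $v\times v$ minors of $G(A)$ in a fixed order; $M_0(A)=M_{-1}(A)=(1)\in\mathcal{L}$. For $K\subseteq\mathcal{L}^{mn}$, $M_v(K)=\max_{A\in K}\|M_v(A)\|_\infty$. *)

From HB Require Import structures.
From mathcomp Require Import all_boot all_order all_fingroup all_algebra.
From mathcomp Require Import zify.
From mathcomp Require Import boolp classical_sets reals.
Set Implicit Arguments. Unset Strict Implicit. Unset Printing Implicit Defensive.
Import Order.TTheory GRing.Theory Num.Theory.
Local Open Scope ring_scope.

(* The field L = F((X^{-1})) of formal Laurent series in X^{-1} over a       *)
(* finite field F: an element is given by its coefficient function           *)
(* i |-> (coefficient of X^i), whose support is bounded above.               *)
Section Laurent.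
Variable F : finFieldType.

Definition bounded_above (f : int -> F) : Prop :=
  exists N : int, forall i : int, N < i -> f i = 0.

Record laurent := Laurent { lcoef : int -> F ; lcoefP : bounded_above lcoef }.

Definition lbnd (x : laurent) : int := projT1 (cid (lcoefP x)).
Lemma lbndP (x : laurent) i : lbnd x < i -> lcoef x i = 0.
Proof. exact: (projT2 (cid (lcoefP x))). Qed.

Definition tnat (z : int) : nat := if z is Posz k then k else 0%N.

Lemma lzero_bnd : bounded_above (fun _ => 0).
Proof. by exists 0. Qed.
Definition lzero : laurent := Laurent lzero_bnd.

Lemma lone_bnd : bounded_above (fun i => if i == 0 then 1 else 0).
Proof. by exists 0 => i Hi; rewrite gt_eqF. Qed.
Definition lone : laurent := Laurent lone_bnd.

Lemma ladd_bnd (x y : laurent) : bounded_above (fun i => lcoef x i + lcoef y i).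
Proof.
exists (Num.max (lbnd x) (lbnd y)) => i; rewrite gt_max => /andP[hx hy].
by rewrite !lbndP // addr0.
Qed.
Definition ladd (x y : laurent) : laurent := Laurent (ladd_bnd x y).

Lemma lopp_bnd (x : laurent) : bounded_above (fun i => - lcoef x i).
Proof. by exists (lbnd x) => i hi; rewrite lbndP // oppr0. Qed.
Definition lopp (x : laurent) : laurent := Laurent (lopp_bnd x).

(* Cauchy product: (xy)_n = sum_{n - bnd y <= i <= bnd x} x_i y_(n-i) *)
Definition lmul_coef (x y : laurent) (n : int) : F :=
  \sum_(j < tnat (lbnd x + lbnd y - n + 1))
     lcoef x (lbnd x - j%:Z) * lcoef y (n - lbnd x + j%:Z).

Lemma lmul_bnd (x y : laurent) : bounded_above (lmul_coef x y).
Proof.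
exists (lbnd x + lbnd y) => i hi; rewrite /lmul_coef.
have -> : tnat (lbnd x + lbnd y - i + 1) = 0%N.
  case E : (lbnd x + lbnd y - i + 1) => [k|k] //=.
  have : lbnd x + lbnd y - i + 1 <= 0.
    by move: hi; lia.
  by rewrite E; case: k {E} => // k; rewrite lez_nat.
by rewrite big_ord0.
Qed.
Definition lmul (x y : laurent) : laurent := Laurent (lmul_bnd x y).

Definition is_ldeg (x : laurent) (d : int) : Prop :=
  lcoef x d != 0 /\ forall i, d < i -> lcoef x i = 0.

Definition labs (R : realType) (x : laurent) : R :=
  match pselect (exists d, is_ldeg x d) with
  | left p => ((#|F|)%:R : R) ^ (projT1 (cid p))
  | right _ => 0
  end.

End Laurent.

Section Matrices.
Variables (F : finFieldType) (R : realType).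
Local Notation L := (laurent F).

Definition mxnorm m n (A : 'M[L]_(m, n)) : R :=
  \big[Num.max/0]_(ij : 'I_m * 'I_n) labs R (A ij.1 ij.2).

Definition vnorm p (x : 'I_p -> L) : R :=
  \big[Num.max/0]_(i : 'I_p) labs R (x i).

(* closed ball {A : ||A - C|| <= k^r}; its radius is rho = k^r *)
Definition in_ball m n (C : 'M[L]_(m, n)) (r : int) (A : 'M[L]_(m, n)) : Prop :=
  mxnorm (\matrix_(i, j) ladd (A i j) (lopp (C i j))) <= ((#|F|)%:R : R) ^ r.

Definition radius (r : int) : R := ((#|F|)%:R : R) ^ r.

Definition ldot p (x y : 'I_p -> L) : L :=
  \big[@ladd F/lzero F]_(i < p) lmul (x i) (y i).

Definition ortho_normal m p (y : 'I_m -> 'I_p -> L) : Prop :=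
  (forall i j, ldot (y i) (y j) = if i == j then lone F else lzero F) /\
  (forall t : 'I_m -> L,
     vnorm (fun k => \big[@ladd F/lzero F]_(i < m) lmul (t i) (y i k))
     = vnorm t).

(* tilde A^star = ( A^T  I_n ; I_m  0 ), an (n+m) x (m+n) matrix *)
Definition tAstar m n (A : 'M[L]_(m, n)) : 'M[L]_(n + m, m + n) :=
  \matrix_(i, j)
    match split i, split j with
    | inl i', inl j' => A j' i'
    | inl i', inr j' => if i' == j' then lone F else lzero F
    | inr i', inl j' => if i' == j' then lone F else lzero F
    | inr _, inr _ => lzero F
    end.

Definition Gmx m n (y : 'I_m -> 'I_(n + m) -> L) (A : 'M[L]_(m, n)) : 'M[L]_m :=
  \matrix_(i, l) ldot (y i) (fun k => tAstar A k (lshift n l)).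

Definition ldet v (M : 'M[L]_v) : L :=
  \big[@ladd F/lzero F]_(s : 'S_v)
     (let p := \big[@lmul F/lone F]_(i < v) M i (s i) in
      if odd_perm s then lopp p else p).

Definition incr v m (f : {ffun 'I_v -> 'I_m}) : bool :=
  [forall i : 'I_v, forall j : 'I_v, (i < j)%N ==> (f i < f j)%N].

(* ||M_w(A)||_oo: max of |all w x w minors of G(A)|; M_0 = M_{-1} = (1) *)
Definition Mnorm m n (y : 'I_m -> 'I_(n + m) -> L) (w : int) (A : 'M[L]_(m, n)) : R :=
  match w with
  | Posz w'.+1 =>
      \big[Num.max/0]_(fg : {ffun 'I_w'.+1 -> 'I_m} * {ffun 'I_w'.+1 -> 'I_m}
                       | incr fg.1 && incr fg.2)
         labs R (ldet (\matrix_(a, b) Gmx y A (fg.1 a) (fg.2 b)))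
  | _ => labs R (lone F)
  end.

(* M_w(K) = max_{A in K} ||M_w(A)||, for K a ball (the max is attained;
   we write it as a supremum) *)
Definition Mball m n (y : 'I_m -> 'I_(n + m) -> L) (w : int)
  (C : 'M[L]_(m, n)) (r : int) : R :=
  sup [set Mnorm y w A | A in in_ball C r].

End Matrices.

(** Each minor of size [v-1] of [G(A)] moves by at most [rho(B') M_(v-2)(B'')]
    when [A] ranges over [B']: changing one row of [A] changes one column of
    [G(A)] by at most [rho(B')] (the [y_i] have entries of absolute value at
    most 1), and expanding the minor along that column bounds the change by
    [rho(B')] times a minor of size [v-2] of a point of [B'']. Since
    [rho(B') < mu rho(B'')/2 <= mu rho(B)], the hypothesis makes this change
    smaller than [M_(v-1)(A')], so the ultrametric inequality gives
    [M_(v-1)(A) <= M_(v-1)(A')] for every [A] in [B']. *)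
From HB Require Import structures.
From mathcomp Require Import all_boot all_order all_fingroup all_algebra.
From mathcomp Require Import zify.
From mathcomp Require Import boolp classical_sets reals.
From mathcomp.algebra_tactics Require Import lra.
Set Implicit Arguments. Unset Strict Implicit. Unset Printing Implicit Defensive.
Import Order.TTheory GRing.Theory Num.Theory.
Local Open Scope ring_scope.

Section LaurentRing.
Variable F : finFieldType.
Local Notation L := (laurent F).

Lemma laurentP (x y : L) : lcoef x =1 lcoef y -> x = y.
Proof.
case: x => fx px; case: y => fy py /= /funext E; subst fy.
by congr Laurent; exact: Prop_irrelevance.
Qed.

Definition vanish_above (x : L) (a : int) := forall i, a < i -> lcoef x i = 0.

Lemma vanish_above_lbnd x : vanish_above x (lbnd x).
Proof. by move=> i; apply: lbndP. Qed.
Arguments vanish_above_lbnd : clear implicits.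

Lemma vanish_above_le x a b : vanish_above x a -> a <= b -> vanish_above x b.
Proof. by move=> vx hab i hi; apply: vx; apply: le_lt_trans hi. Qed.

Lemma lcoefD (x y : L) i : lcoef (ladd x y) i = lcoef x i + lcoef y i.
Proof. by []. Qed.

Definition conv (x y : L) (a : int) (K : nat) (n : int) : F :=
  \sum_(j < K) lcoef x (a - j%:Z) * lcoef y (n - a + j%:Z).

Lemma conv_widen x y a b n K K' : vanish_above y b -> a + b - n + 1 <= K%:Z ->
  (K <= K')%N -> conv x y a K n = conv x y a K' n.
Proof.
move=> vy hK hKK'; rewrite /conv -(subnKC hKK') big_split_ord /=.
rewrite [X in _ = _ + X]big1 ?addr0 // => j _.
by rewrite [lcoef y _]vy ?mulr0 // PoszD; lia.
Qed.

Lemma conv_shift x y a K n s : vanish_above x a ->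
  conv x y (a + s%:Z) (K + s) n = conv x y a K n.
Proof.
move=> vx; elim: s => [|s IH]; first by rewrite addr0 addn0.
rewrite addnS -IH /conv big_ord_recl /= subr0 vx ?ltrDl //.
rewrite mul0r add0r; apply: eq_bigr => j _.
by congr (lcoef x _ * lcoef y _); rewrite /bump /=; lia.
Qed.

Lemma lcoefM_conv x y a b K n : vanish_above x a -> vanish_above y b ->
  a + b - n + 1 <= K%:Z -> lcoef (lmul x y) n = conv x y a K n.
Proof.
move=> vx vy hK; rewrite /= /lmul_coef -/(conv x y (lbnd x) _ n).
set a0 := lbnd x; set K0 := tnat _.
have hK0 : a0 + lbnd y - n + 1 <= K0%:Z.
  by rewrite /K0; case: (a0 + lbnd y - n + 1) => //= k; lia.
pose s0 := tnat (a - a0); pose s := tnat (a0 - a).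
have e0 : a0 + s0%:Z = Num.max a a0 by rewrite /s0; case E: (a - a0) => [k|k] /=; lia.
have e1 : a + s%:Z = Num.max a a0 by rewrite /s; case E: (a0 - a) => [k|k] /=; lia.
rewrite -(@conv_shift x y a0 K0 n s0 (vanish_above_lbnd x)) -(@conv_shift x y a K n s vx) e0 e1.
rewrite (@conv_widen x y _ _ _ _ (K0 + s0 + (K + s))%N (vanish_above_lbnd y)); last 2 first.
- by rewrite -e0; lia.
- by rewrite leq_addr.
symmetry; apply: (@conv_widen x y _ _ _ _ _ vy); last exact: leq_addl.
by rewrite -e1; lia.
Qed.

Lemma vanish_aboveM x y a b : vanish_above x a -> vanish_above y b ->
  vanish_above (lmul x y) (a + b).
Proof.
move=> vx vy i hi; rewrite (@lcoefM_conv x y a b 0) /conv ?big_ord0 //; lia.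
Qed.

Definition ltrunc (x : L) (a : int) (K : nat) : {poly F} :=
  \poly_(i < K) lcoef x (a - i%:Z).

(* The top coefficients of a product are those of the product of truncations,
   so the ring laws of [lmul] are inherited from [{poly F}]. *)
Lemma lcoefM_trunc x y a b K d : vanish_above x a -> vanish_above y b ->
  (d < K)%N -> lcoef (lmul x y) (a + b - d%:Z) = (ltrunc x a K * ltrunc y b K)`_d.
Proof.
move=> vx vy hd; rewrite (@lcoefM_conv x y a b d.+1) //; last first.
  by rewrite -addn1 PoszD; lia.
rewrite coefM /conv; apply: eq_bigr => j _.
have hj : (j <= d)%N by rewrite -ltnS.
rewrite !coef_poly (leq_ltn_trans hj hd) (leq_ltn_trans (leq_subr _ _) hd).
by congr (_ * lcoef y _); rewrite -subzn //; move: (nat_of_ord j) => jj; lia.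
Qed.

Lemma coefM_eq_le (p q p' q' : {poly F}) d :
  (forall i, (i <= d)%N -> p`_i = p'`_i) -> (forall i, (i <= d)%N -> q`_i = q'`_i) ->
  (p * q)`_d = (p' * q')`_d.
Proof.
move=> hp hq; rewrite !coefM; apply: eq_bigr => j _.
have hj : (j <= d)%N by rewrite -ltnS.
by rewrite hp // hq // leq_subr.
Qed.

Lemma coef_ltruncM x y a b K i : vanish_above x a -> vanish_above y b ->
  (i < K)%N -> (ltrunc (lmul x y) (a + b) K)`_i = (ltrunc x a K * ltrunc y b K)`_i.
Proof. by move=> vx vy hi; rewrite coef_poly hi (lcoefM_trunc (K := K)). Qed.

Lemma lt_or_sub (A n : int) : A < n \/ exists d : nat, n = A - d%:Z.
Proof.
case: (ltP A n) => h; first by left.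
by right; exists (tnat (A - n)); case E: (A - n) => [k|k] /=; lia.
Qed.

Lemma lmulA : associative (@lmul F).
Proof.
move=> x y z; apply: laurentP => n.
set a := lbnd x; set b := lbnd y; set c := lbnd z.
have vx := vanish_above_lbnd x; have vy := vanish_above_lbnd y.
have vz := vanish_above_lbnd z.
have vxy := vanish_aboveM vx vy; have vyz := vanish_aboveM vy vz.
case: (lt_or_sub (a + b + c) n) => [hn|[d ->]].
  by rewrite (vanish_aboveM vx vyz) ?(vanish_aboveM vxy vz) //; lia.
have -> : a + b + c - d%:Z = a + (b + c) - d%:Z by lia.
rewrite (lcoefM_trunc (K := d.+1) vx vyz) //.
have -> : a + (b + c) - d%:Z = (a + b) + c - d%:Z by lia.
rewrite (lcoefM_trunc (K := d.+1) vxy vz) //.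
transitivity ((ltrunc x a d.+1 * (ltrunc y b d.+1 * ltrunc z c d.+1))`_d).
  by apply: coefM_eq_le => // i hi; rewrite coef_ltruncM.
by rewrite mulrA; symmetry; apply: coefM_eq_le => // i hi; rewrite coef_ltruncM.
Qed.

Lemma lmulC : commutative (@lmul F).
Proof.
move=> x y; apply: laurentP => n.
set a := lbnd x; set b := lbnd y.
have vx := vanish_above_lbnd x; have vy := vanish_above_lbnd y.
case: (lt_or_sub (a + b) n) => [hn|[d ->]].
  by rewrite (vanish_aboveM vx vy) ?(vanish_aboveM vy vx) //; lia.
rewrite (lcoefM_trunc (K := d.+1) vx vy) // mulrC [a + b]addrC.
by rewrite (lcoefM_trunc (K := d.+1) vy vx).
Qed.

Lemma lmulDl : left_distributive (@lmul F) (@ladd F).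
Proof.
move=> x y z; apply: laurentP => n.
set a := Num.max (lbnd x) (lbnd y); set c := lbnd z.
have vx : vanish_above x a by apply: vanish_above_le (vanish_above_lbnd x) _; rewrite le_max lexx.
have vy : vanish_above y a.
  by apply: vanish_above_le (vanish_above_lbnd y) _; rewrite le_max lexx orbT.
have vz := vanish_above_lbnd z.
have vxy : vanish_above (ladd x y) a by move=> i hi /=; rewrite vx ?vy ?addr0.
case: (lt_or_sub (a + c) n) => [hn|[d ->]]; rewrite lcoefD.
  by rewrite (vanish_aboveM vxy vz) ?(vanish_aboveM vx vz) ?(vanish_aboveM vy vz) ?addr0.
rewrite (lcoefM_trunc (K := d.+1) vxy vz) // (lcoefM_trunc (K := d.+1) vx vz) //.
rewrite (lcoefM_trunc (K := d.+1) vy vz) //.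
have -> : ltrunc (ladd x y) a d.+1 = ltrunc x a d.+1 + ltrunc y a d.+1.
  by apply/polyP => i; rewrite coefD !coef_poly; case: ifP; rewrite ?addr0.
by rewrite mulrDl coefD.
Qed.

Lemma lmul1 : left_id (lone F) (@lmul F).
Proof.
move=> x; apply: laurentP => n.
have v1 : vanish_above (lone F) 0 by move=> i hi /=; rewrite gt_eqF.
have vx := vanish_above_lbnd x.
case: (lt_or_sub (0 + lbnd x) n) => [hn|[d ->]].
  by rewrite (vanish_aboveM v1 vx) // vx //; rewrite add0r in hn.
rewrite (lcoefM_trunc (K := d.+1) v1 vx) //.
have -> : ltrunc (lone F) 0 d.+1 = 1.
  by apply/polyP => i; rewrite coef_poly coef1 /=; case: i => [|i] //=; case: ifP.
by rewrite mul1r coef_poly ltnSn add0r.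
Qed.

Lemma laddA : associative (@ladd F).
Proof. by move=> x y z; apply: laurentP => i /=; rewrite addrA. Qed.
Lemma laddC : commutative (@ladd F).
Proof. by move=> x y; apply: laurentP => i /=; rewrite addrC. Qed.
Lemma ladd0 : left_id (lzero F) (@ladd F).
Proof. by move=> x; apply: laurentP => i /=; rewrite add0r. Qed.
Lemma laddN : left_inverse (lzero F) (@lopp F) (@ladd F).
Proof. by move=> x; apply: laurentP => i /=; rewrite addNr. Qed.

Lemma lone_neq0 : lone F <> lzero F.
Proof. by move=> /(congr1 (fun x => lcoef x 0)) /= /eqP; rewrite oner_eq0. Qed.

End LaurentRing.

HB.instance Definition _ (F : finFieldType) := gen_eqMixin (laurent F).
HB.instance Definition _ (F : finFieldType) := gen_choiceMixin (laurent F).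
HB.instance Definition _ (F : finFieldType) :=
  GRing.isZmodule.Build (laurent F) (@laddA F) (@laddC F) (@ladd0 F) (@laddN F).
HB.instance Definition _ (F : finFieldType) :=
  GRing.Zmodule_isComNzRing.Build (laurent F) (@lmulA F) (@lmulC F) (@lmul1 F)
    (@lmulDl F) (introN eqP (@lone_neq0 F)).

Section AbsoluteValue.
Context {F : finFieldType} {R : realType}.
Local Notation L := (laurent F).
Local Notation k := ((#|F|)%:R : R).
Local Notation labs := (labs R).

Lemma card_gt1 : 1 < k.
Proof.
rewrite ltr1n; apply/card_gt1P; exists 0, 1; rewrite !inE eq_sym.
by split => //; exact: oner_neq0.
Qed.

Lemma kX_gt0 (d : int) : 0 < k ^ d.
Proof. exact/exprz_gt0/lt_trans/card_gt1. Qed.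

Lemma kX_ge0 (d : int) : 0 <= k ^ d.
Proof. exact/ltW/kX_gt0. Qed.

Lemma ler_kX (d e : int) : (k ^ d <= k ^ e) = (d <= e).
Proof. exact: (ler_eXz2l card_gt1). Qed.

Lemma ldeg_uniq (x : L) d e : is_ldeg x d -> is_ldeg x e -> d = e.
Proof.
move=> [hd vd] [he ve]; apply/eqP; rewrite eq_le !leNgt.
by apply/andP; split; apply/negP; [move/ve | move/vd]; apply/eqP.
Qed.

Lemma labs_ldeg (x : L) d : is_ldeg x d -> labs x = k ^ d.
Proof.
move=> hd; rewrite /labs; case: pselect => [p|[]]; last by exists d.
by case: (cid p) => e he /=; rewrite (ldeg_uniq he hd).
Qed.

Lemma ldeg_exists (x : L) i : lcoef x i != 0 -> exists2 d, is_ldeg x d & i <= d.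
Proof.
move=> hi.
have hb : i <= lbnd x by rewrite leNgt; apply/negP => /lbndP; apply/eqP.
have ex : exists j : nat, lcoef x (lbnd x - j%:Z) != 0.
  exists (tnat (lbnd x - i)); move: hb hi; case E: (lbnd x - i) => [j|j] /= hb hi.
    by have -> : lbnd x - j%:Z = i by lia.
  lia.
case: (ex_minnP ex) => j hj hmin.
have below (l : int) : lbnd x - j%:Z < l -> lcoef x l = 0.
  move=> hl; case: (leP l (lbnd x)) => hl2; last exact: lbndP.
  have := hmin (tnat (lbnd x - l)); case E: (lbnd x - l) => [j'|j'] /=; last lia.
  have -> : lbnd x - j'%:Z = l by lia.
  by move=> hm; apply/eqP; apply: contraTT hl => /hm; lia.
exists (lbnd x - j%:Z); first by split.
by rewrite leNgt; apply/negP => /below; apply/eqP.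
Qed.

Lemma labs_cases (x : L) : x = 0 /\ labs x = 0 \/ exists2 d, is_ldeg x d & labs x = k ^ d.
Proof.
case: (pselect (exists d, is_ldeg x d)) => [[d hd]|nd].
  by right; exists d => //; apply: labs_ldeg.
left; split; last by rewrite /labs; case: pselect.
apply: laurentP => i /=; apply/eqP; apply: contraT => hi.
by case: nd; case: (ldeg_exists hi) => d hd _; exists d.
Qed.

Lemma labs_ge0 (x : L) : 0 <= labs x.
Proof. by case: (labs_cases x) => [[_ ->]|[d _ ->]] //; apply: kX_ge0. Qed.

Lemma labs0 : labs (0 : L) = 0.
Proof. by case: (labs_cases (0 : L)) => [[_ ->]|[d [/eqP hd _] _]]. Qed.

Lemma labs1 : labs (1 : L) = 1.
Proof.
rewrite (@labs_ldeg _ 0) ?expr0z //; split => [|i hi].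
  by change (lcoef (lone F) 0 != 0); rewrite /= oner_neq0.
by change (lcoef (lone F) i = 0); rewrite /= gt_eqF.
Qed.

Lemma labsN (x : L) : labs (- x) = labs x.
Proof.
case: (labs_cases x) => [[-> _]|[d [hd vd] ->]]; first by rewrite oppr0.
apply: labs_ldeg; split => [|i hi] /=; first by rewrite oppr_eq0.
by rewrite vd ?oppr0.
Qed.

Lemma labs_sgn j : labs ((-1) ^+ j : L) = 1.
Proof. by rewrite -signr_odd; case: odd; rewrite ?expr1 ?labsN labs1. Qed.

Lemma labs_coef_ge (x : L) i : lcoef x i != 0 -> k ^ i <= labs x.
Proof. by move=> /ldeg_exists[d hd hid]; rewrite (labs_ldeg hd) ler_kX. Qed.

Lemma labs_le_kX (x : L) d : (labs x <= k ^ d) <-> vanish_above x d.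
Proof.
split => [h i hi|vx].
  apply/eqP; apply: contraT => /labs_coef_ge /le_trans /(_ h).
  by rewrite ler_kX; lia.
case: (labs_cases x) => [[_ ->]|[e [he _] ->]]; first exact: kX_ge0.
by rewrite ler_kX leNgt; apply/negP => /vx; apply/eqP.
Qed.

Lemma labsD_le (x y : L) c : labs x <= c -> labs y <= c -> labs (x + y) <= c.
Proof.
move=> hx hy.
case: (labs_cases (x + y)) => [[_ ->]|[e [he _] ->]]; first exact: le_trans (labs_ge0 x) hx.
move: he; rewrite lcoefD; have [hx0 he|hne _] := eqVneq (lcoef x e) 0.
  by apply: le_trans hy; apply: labs_coef_ge; rewrite hx0 add0r in he.
exact: le_trans (labs_coef_ge hne) hx.
Qed.

Lemma labsM_le (x y : L) : labs (x * y) <= labs x * labs y.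
Proof.
case: (labs_cases x) => [[-> _]|[d [_ vd] ->]]; first by rewrite mul0r labs0 mul0r.
case: (labs_cases y) => [[-> _]|[e [_ ve] ->]]; first by rewrite mulr0 labs0 mulr0.
rewrite -exprzDr ?unitfE ?gt_eqF ?(lt_trans ltr01 card_gt1) //.
by apply/labs_le_kX; apply: vanish_aboveM.
Qed.

Lemma labs_sum_le (I : Type) (s : seq I) (P : pred I) (f : I -> L) c : 0 <= c ->
  (forall i, P i -> labs (f i) <= c) -> labs (\sum_(i <- s | P i) f i) <= c.
Proof.
move=> c0 hf; apply: (big_ind (fun z => labs z <= c)) => //; first by rewrite labs0.
by move=> a b; apply: labsD_le.
Qed.

Lemma labs_prod_le (I : Type) (s : seq I) (P : pred I) (f : I -> L) :
  labs (\prod_(i <- s | P i) f i) <= \prod_(i <- s | P i) labs (f i).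
Proof.
apply: (big_ind2 (fun z w => labs z <= w)) => [|a1 a2 b1 b2 h1 h2|//].
  by rewrite labs1.
by apply: le_trans (labsM_le _ _) _; apply: ler_pM => //; apply: labs_ge0.
Qed.

End AbsoluteValue.

Section Minors.
Context {F : finFieldType} {R : realType} {m n : nat}.
Variable y : 'I_m -> 'I_(n + m) -> laurent F.
Hypothesis hy : ortho_normal R y.
Local Notation L := (laurent F).
Local Notation k := ((#|F|)%:R : R).
Local Notation labs := (labs R).
Local Notation ball := (in_ball R).

Lemma in_ballP (C : 'M[L]_(m, n)) r A :
  ball C r A <-> forall i j, labs (A i j - C i j) <= k ^ r.
Proof.
split => [h i j|h]; last first.
  by apply: bigmax_le => [|[i j] _]; rewrite ?kX_ge0 // mxE; apply: h.
apply: le_trans h; rewrite /mxnorm.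
by apply: le_trans (le_bigmax _ _ (i, j)); rewrite mxE.
Qed.

Lemma ball_center (C : 'M[L]_(m, n)) r : ball C r C.
Proof. by apply/in_ballP => i j; rewrite subrr labs0 kX_ge0. Qed.

Lemma labs_ballB_le (C P Q : 'M[L]_(m, n)) r i j :
  ball C r P -> ball C r Q -> labs (P i j - Q i j) <= k ^ r.
Proof.
move=> /in_ballP hP /in_ballP hQ.
have -> : P i j - Q i j = (P i j - C i j) + - (Q i j - C i j).
  by rewrite opprB addrA subrK.
by apply: labsD_le; rewrite ?labsN.
Qed.

Lemma lmonomial_bnd (d : int) : bounded_above (fun i => if i == d then (1 : F) else 0).
Proof. by exists d => i hi; rewrite gt_eqF. Qed.
Definition lmonomial (d : int) : L := Laurent (lmonomial_bnd d).

Lemma labs_lmonomial d : labs (lmonomial d) = k ^ d.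
Proof.
by apply: labs_ldeg; split => [|i hi] /=; rewrite ?eqxx ?oner_neq0 ?gt_eqF.
Qed.

Lemma radius_le_sub_ball (C C' : 'M[L]_(m, n)) r r' : (0 < m)%N -> (0 < n)%N ->
  (forall A, ball C' r' A -> ball C r A) -> k ^ r' <= k ^ r.
Proof.
move=> m_gt0 n_gt0 sub; pose i0 := Ordinal m_gt0; pose j0 := Ordinal n_gt0.
pose E : 'M[L]_(m, n) := \matrix_(i, j) if (i == i0) && (j == j0) then lmonomial r' else 0.
have hE : ball C' r' (C' + E).
  apply/in_ballP => i j; rewrite !mxE addrAC subrr add0r.
  by case: ifP; rewrite ?labs_lmonomial ?labs0 ?kX_ge0.
have := labs_ballB_le i0 j0 (sub _ hE) (sub _ (ball_center C' r')).
by rewrite !mxE addrAC subrr add0r labs_lmonomial.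
Qed.

Lemma ortho_normal_labs_le1 i j : labs (y i j) <= 1.
Proof.
case: hy => _ /(_ (fun l => if l == i then 1 else 0)).
have -> : (fun j => \big[@ladd F/lzero F]_(l < m) lmul (if l == i then 1 else 0) (y l j)) = y i.
  apply: funext => j'; change (\sum_(l < m) (if l == i then 1 else 0) * y l j' = y i j').
  by rewrite (bigD1 i) //= eqxx mul1r big1 ?addr0 // => l /negbTE ->; rewrite mul0r.
move=> hnorm; apply: le_trans (_ : _ <= vnorm R (y i)) _; first exact: le_bigmax.
rewrite hnorm; apply: bigmax_le => // l _.
by case: (l == i); rewrite ?labs1 ?labs0.
Qed.

Lemma Gmx_col_eq (P Q : 'M[L]_(m, n)) i l :
  (forall j, P l j = Q l j) -> Gmx y P i l = Gmx y Q i l.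
Proof.
move=> hl; rewrite !mxE; apply: eq_bigr => j _; rewrite !mxE.
by rewrite (unsplitK (inl l)); case: (split j) => j'; rewrite ?hl.
Qed.

Lemma labs_GmxB_le (P Q : 'M[L]_(m, n)) i l c : 0 <= c ->
  (forall j, labs (P l j - Q l j) <= c) -> labs (Gmx y P i l - Gmx y Q i l) <= c.
Proof.
move=> c0 hl; rewrite !mxE.
change (labs (\sum_(j < n + m) y i j * tAstar P j (lshift n l)
   - \sum_(j < n + m) y i j * tAstar Q j (lshift n l)) <= c).
rewrite -sumrB; apply: labs_sum_le => // j _; rewrite -mulrBr.
apply: le_trans (labsM_le _ _) _; rewrite -[c]mul1r.
apply: ler_pM; rewrite ?labs_ge0 ?ortho_normal_labs_le1 // !mxE (unsplitK (inl l)).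
by case: (split j) => j'; rewrite ?subrr ?labs0.
Qed.

Lemma ldetE w (M : 'M[L]_w) : ldet M = \det M.
Proof.
apply: eq_bigr => s _ /=.
by case: (odd_perm s); rewrite /= ?expr1 ?expr0 ?mulN1r ?mul1r.
Qed.

Lemma labs_det_le w (M : 'M[L]_w) c : 0 <= c ->
  (forall i j, labs (M i j) <= c) -> labs (\det M) <= c ^+ w.
Proof.
move=> c0 hc; apply: labs_sum_le => [|s _]; first exact: exprn_ge0.
apply: le_trans (labsM_le _ _) _; rewrite labs_sgn mul1r.
apply: le_trans (@labs_prod_le F R _ _ xpredT (fun i => M i (s i))) _.
have -> : c ^+ w = \prod_(i : 'I_w) c by rewrite prodr_const card_ord.
by apply: ler_prod => i _; rewrite labs_ge0 hc.
Qed.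

Definition Gminor w (P : 'M[L]_(m, n)) (f g : 'I_w -> 'I_m) : 'M[L]_w :=
  \matrix_(a, b) Gmx y P (f a) (g b).

Lemma GminorE w (P : 'M[L]_(m, n)) (f g : 'I_w -> 'I_m) a b :
  Gminor P f g a b = Gmx y P (f a) (g b).
Proof. exact: mxE. Qed.

Lemma incrP v (f : {ffun 'I_v -> 'I_m}) : reflect {homo f : i j / (i < j)%N} (incr f).
Proof.
apply: (iffP forallP) => [h i j|h i]; first by move: (h i) => /forallP /(_ j) /implyP.
by apply/forallP => j; apply/implyP; apply: h.
Qed.

Lemma labs_det_Gminor_le w (P : 'M[L]_(m, n)) (f g : 'I_w -> 'I_m) :
  {homo f : i j / (i < j)%N} -> {homo g : i j / (i < j)%N} ->
  labs (\det (Gminor P f g)) <= Mnorm R y w P.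
Proof.
case: w f g => [|w] f g hf hg; first by rewrite det_mx00 /Mnorm labs1.
pose fg := ([ffun a => f a], [ffun b => g b]).
have hfg : incr fg.1 && incr fg.2.
  by apply/andP; split; apply/incrP => i j hij; rewrite !ffunE ?hf ?hg.
rewrite /Mnorm (bigmaxD1 fg _ _ hfg) le_max ldetE; apply/orP; left.
suff -> : Gminor P f g = \matrix_(a, b) Gmx y P (fg.1 a) (fg.2 b) by [].
by apply/matrixP => a b; rewrite !mxE !ffunE.
Qed.

Lemma Mnorm_ge0 w (P : 'M[L]_(m, n)) : 0 <= Mnorm R y w P.
Proof. by case: w => [[|w]|w]; rewrite /= ?labs_ge0 // bigmax_ge_id. Qed.

Lemma Mnorm_bounded (C : 'M[L]_(m, n)) r w :
  exists c, forall P, ball C r P -> Mnorm R y w P <= c.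
Proof.
case: w => [[|w]|w]; try by exists (labs (1 : L)).
pose c := Num.max (\big[Num.max/0]_(il : 'I_m * 'I_m) labs (Gmx y C il.1 il.2)) (k ^ r).
have c0 : 0 <= c by rewrite le_max kX_ge0 orbT.
exists (c ^+ w.+1) => P hP; apply: bigmax_le => [|fg _]; first exact: exprn_ge0.
rewrite ldetE; apply: labs_det_le => // a b; rewrite mxE.
rewrite -[Gmx y P _ _](subrK (Gmx y C (fg.1 a) (fg.2 b))); apply: labsD_le.
  apply: le_trans (_ : _ <= k ^ r) _; last by rewrite le_max lexx orbT.
  by apply: labs_GmxB_le (kX_ge0 r) _ => j; move/in_ballP: hP; apply.
by rewrite le_max (le_bigmax _ (fun il => labs (Gmx y C il.1 il.2)) (fg.1 a, fg.2 b)).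
Qed.

Lemma Mnorm_le_Mball (C : 'M[L]_(m, n)) r w P :
  ball C r P -> Mnorm R y w P <= Mball R y w C r.
Proof.
move=> hP; apply: sup_upper_bound; last by exists P.
split; first by exists (Mnorm R y w C), C => //; apply: ball_center.
by case: (Mnorm_bounded C r w) => c hc; exists c => _ [A hA <-]; apply: hc.
Qed.

Lemma Mball_ge0 (C : 'M[L]_(m, n)) r w : 0 <= Mball R y w C r.
Proof. exact: le_trans (Mnorm_ge0 _ _) (Mnorm_le_Mball w (ball_center C r)). Qed.

Lemma Mball_le (C : 'M[L]_(m, n)) r w c :
  (forall P, ball C r P -> Mnorm R y w P <= c) -> Mball R y w C r <= c.
Proof.
move=> hc; apply: ge_sup => [|_ [A hA <-]]; last exact: hc.
by exists (Mnorm R y w C), C => //; apply: ball_center.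
Qed.

Lemma detB_expand_col w (P Q : 'M[L]_w) b0 :
  (forall a b, b != b0 -> P a b = Q a b) ->
  \det P - \det Q = \sum_a (P a b0 - Q a b0) * cofactor P a b0.
Proof.
move=> h; rewrite (expand_det_col P b0) (expand_det_col Q b0) -sumrB.
apply: eq_bigr => a _; rewrite mulrBl; congr (_ - _ * _).
rewrite /cofactor; congr (_ * \det _); apply/matrixP => i j; rewrite !mxE h //.
by rewrite eq_sym neq_lift.
Qed.

Lemma increasing_inj w (g : 'I_w -> 'I_m) : {homo g : i j / (i < j)%N} -> injective g.
Proof.
move=> hg b b' e; apply: val_inj.
by case: (ltngtP b b') => [/hg|/hg|//]; rewrite e ltnn.
Qed.

Lemma lift_homo_ltn w (h : 'I_w.+1) : {homo lift h : i j / (i < j)%N}.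
Proof. by move=> i j; rewrite /= !ltnNge leq_bump2. Qed.

Lemma labs_cofactor_Gminor_le w (P : 'M[L]_(m, n)) (f g : 'I_w.+1 -> 'I_m) a b :
  {homo f : i j / (i < j)%N} -> {homo g : i j / (i < j)%N} ->
  labs (cofactor (Gminor P f g) a b) <= Mnorm R y w P.
Proof.
move=> hf hg; rewrite /cofactor; apply: le_trans (labsM_le _ _) _.
rewrite labs_sgn mul1r.
have -> : row' a (col' b (Gminor P f g)) = Gminor P (f \o lift a) (g \o lift b).
  by apply/matrixP => i j; rewrite !mxE.
by apply: labs_det_Gminor_le => i j hij /=; [apply: hf | apply: hg]; apply: lift_homo_ltn.
Qed.

Lemma Gminor_row_change w (f g : 'I_w.+1 -> 'I_m) (P Q : 'M[L]_(m, n)) (t : 'I_m) c :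
  {homo f : i j / (i < j)%N} -> {homo g : i j / (i < j)%N} -> 0 <= c ->
  (forall l j, l != t -> P l j = Q l j) -> (forall j, labs (P t j - Q t j) <= c) ->
  labs (\det (Gminor P f g) - \det (Gminor Q f g)) <= c * Mnorm R y w P.
Proof.
move=> hf hg c0 hPQ ht.
have hrow l j : labs (P l j - Q l j) <= c.
  by have [->|/hPQ->] := eqVneq l t; rewrite ?subrr ?labs0.
have [b0 hb0] : exists b0, forall b, b != b0 -> g b != t.
  case: (pselect (exists b, g b = t)) => [[b1 <-]|nb].
    by exists b1 => b; apply: contra_neq; apply: increasing_inj.
  by exists ord0 => b _; apply/eqP => e; apply: nb; exists b.
rewrite (@detB_expand_col _ _ _ b0) => [|a b /hb0 hb]; last first.
  by rewrite !GminorE; apply: Gmx_col_eq => j; apply: hPQ.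
apply: labs_sum_le => [|a _]; first by rewrite mulr_ge0 ?Mnorm_ge0.
apply: le_trans (labsM_le _ _) _; apply: ler_pM; rewrite ?labs_ge0 //.
  by rewrite !GminorE; apply: labs_GmxB_le.
exact: labs_cofactor_Gminor_le.
Qed.

(* Pass from [A] to [A'] one row at a time, staying inside [B']. *)
Lemma Gminor_ball_diff (C' C'' : 'M[L]_(m, n)) r' r'' w (f g : 'I_w.+1 -> 'I_m) A A' :
  (forall P, ball C' r' P -> ball C'' r'' P) ->
  {homo f : i j / (i < j)%N} -> {homo g : i j / (i < j)%N} ->
  ball C' r' A -> ball C' r' A' ->
  labs (\det (Gminor A f g) - \det (Gminor A' f g)) <= k ^ r' * Mball R y w C'' r''.
Proof.
move=> sub hf hg hA hA'.
pose At (t : nat) : 'M[L]_(m, n) := \matrix_(l, j) if (l < t)%N then A' l j else A l j.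
have hAt t : ball C' r' (At t).
  apply/in_ballP => l j; rewrite mxE.
  by case: ifP => _; [move/in_ballP: hA' | move/in_ballP: hA]; apply.
pose S t := \det (Gminor (At t) f g).
have -> : \det (Gminor A f g) - \det (Gminor A' f g) = \sum_(t < m) (S t - S t.+1).
  rewrite -(big_mkord xpredT (fun t => S t - S t.+1)).
  rewrite (telescope_sumr_eq (fun t => - S t)) // => [|t _]; last by rewrite opprK addrC.
  rewrite /S; have -> : At 0%N = A by apply/matrixP => l j; rewrite mxE ltn0.
  have -> : At m = A' by apply/matrixP => l j; rewrite mxE ltn_ord.
  by rewrite opprK addrC.
apply: labs_sum_le => [|t _]; first by rewrite mulr_ge0 ?kX_ge0 ?Mball_ge0.
apply: le_trans (Gminor_row_change (t := t) hf hg (kX_ge0 r') _ _) _.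
- move=> l j hl; rewrite !mxE [(l < t.+1)%N]ltnS [(l <= t)%N]leq_eqVlt.
  by have /negbTE-> : (l : nat) != t by [].
- by move=> j; apply: labs_ballB_le (hAt _) (hAt _).
- by rewrite ler_pM2l ?kX_gt0 //; apply: Mnorm_le_Mball; apply: sub.
Qed.

Lemma Mnorm_le_max (C' C'' : 'M[L]_(m, n)) r' r'' w A A' :
  (forall P, ball C' r' P -> ball C'' r'' P) -> ball C' r' A -> ball C' r' A' ->
  Mnorm R y w.+1 A <= Num.max (Mnorm R y w.+1 A') (k ^ r' * Mball R y w C'' r'').
Proof.
move=> sub hA hA'; apply: bigmax_le => [|[f g] /andP[/incrP hf /incrP hg]] /=.
  by rewrite le_max (Mnorm_ge0 (Posz w.+1)).
rewrite ldetE -/(Gminor A f g) -(subrK (\det (Gminor A' f g)) (\det (Gminor A f g))).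
apply: labsD_le; rewrite le_max.
  by rewrite (Gminor_ball_diff sub hf hg hA hA') orbT.
by rewrite labs_det_Gminor_le.
Qed.

End Minors.

Unset Implicit Arguments. Set Strict Implicit.

Theorem corollary3p4 (F : finFieldType) (R : realType) (m n : nat)
  (y : 'I_m -> 'I_(n + m) -> laurent F)
  (hy : ortho_normal R y)
  (v : nat) (hv1 : (1 <= v)%N) (hvm : (v <= m)%N)
  (C : 'M[laurent F]_(m, n)) (r : int)       (* B   = ball C r   *)
  (C'' : 'M[laurent F]_(m, n)) (r'' : int)   (* B'' = ball C'' r'' *)
  (C' : 'M[laurent F]_(m, n)) (r' : int)     (* B'  = ball C' r'  *)
  (mu : R) :
  (forall A, in_ball R C'' r'' A -> in_ball R C r A) ->
  0 < mu ->
  (forall A, in_ball R C'' r'' A ->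
     radius F R r * mu * Mball R y (v%:Z - 2) C'' r'' < Mnorm R y (v%:Z - 1) A) ->
  (forall A, in_ball R C' r' A -> in_ball R C'' r'' A) ->
  radius F R r' < 2^-1 * mu * radius F R r'' ->
  forall A', in_ball R C' r' A' ->
    2^-1 * Mball R y (v%:Z - 1) C' r' < Mnorm R y (v%:Z - 1) A'.
Proof.
rewrite /radius => subB mu_gt0 hyp subB' hr A' hA'.
case: v hv1 hvm hyp => [|[|w]] // _ hvm hyp.
  have -> : 1%:Z - 1 = Posz 0 by [].
  have : Mball R y (Posz 0) C' r' <= 1 by apply: Mball_le => P _; rewrite /= labs1.
  by rewrite /= labs1; lra.
have e1 : w.+2%:Z - 1 = w.+1 by lia.
have e2 : w.+2%:Z - 2 = w by lia.
rewrite {}e1 {}e2 in hyp *.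
set K := Mball R y w C'' r'' in hyp *; set c := Mnorm R y w.+1 A'.
have hc : #|F|%:R ^ r * mu * K < c := hyp _ (subB' _ hA').
have K_ge0 : 0 <= K := Mball_ge0 hy C'' r'' w.
have c_gt0 : 0 < c by apply: le_lt_trans _ hc; rewrite !mulr_ge0 ?kX_ge0 // ltW.
suff : Mball R y w.+1 C' r' <= c by lra.
apply: Mball_le => A hA; have [n0|n_gt0] := posnP n.
  by have -> : A = A' by apply/matrixP => i j; have := ltn_ord j; rewrite {2}n0.
have hrr : #|F|%:R ^ r'' <= #|F|%:R ^ r :> R.
  by apply: (radius_le_sub_ball _ n_gt0 subB); apply: leq_trans hvm.
have step_le : #|F|%:R ^ r' * K <= c.
  apply/ltW/le_lt_trans/hc; apply: (ler_wpM2r K_ge0).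
  have : mu * #|F|%:R ^ r'' <= mu * #|F|%:R ^ r by rewrite ler_pM2l.
  have : 0 <= mu * #|F|%:R ^ r'' by rewrite mulr_ge0 ?kX_ge0 ?ltW.
  lra.
apply: le_trans (Mnorm_le_max hy w subB' hA hA') _.
by rewrite ge_max lexx /=; exact: step_le.
Qed.
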